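(* Let $R$ be a dp-minimal integral domain with maximal ideal $\mathfrak M$ and fraction field $K$. (1) If $\mathcal O$ is a local overring of $R$ that is non-dominant (i.e. $\mathfrak M\not\subseteq\mathfrak m$, where $\mathfrak m$ is the maximal ideal of $\mathcal O$), then $\mathcal O$ is a valuation ring and $\mathcal O=R_{\mathfrak p}$ for some prime ideal $\mathfrak p\neq\mathfrak M$ of $R$. (2) Let $\mathcal O\supseteq R$ be a valuation overring with maximal ideal $\mathfrak m$ which dominates $R$ (i.e. $\mathfrak M\subseteq\mathfrak m$), and assume the structure $(K;R,\mathcal O)$ (the field $K$ with unary predicates for $R$ and $\mathcal O$) is dp-minimal. Then $\mathcal O\subseteq R_{\mathfrak p}$ for every prime ideal $\mathfrak p\neq\mathfrak M$ of $R$. Furthermore every prime ideal $\mathfrak p\neq \mathfrak M$ of $R$ is a prime ideal of $\mathcal O$, and every prime ideal of $\mathcal O$ strictly contained in $\mathfrak M$ is a prime ideal of $R$; i.e. $\mathrm{Spec}(R)\setminus\{\mathfrak M\}$ is an initial segment of $\mathrm{Spec}(\mathcal O)\setminus\{\mathfrak m\}$.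
   Context: Rings are commutative with identity; dp-minimal means the theory has dp-rank $1$ (a dp-minimal domain is local). An overring of $R$ is a ring $S$ with $R\subseteq S\subseteq\mathrm{Frac}(R)$. Prime spectra of $R$ and $\mathcal O$ are linearly ordered by inclusion. *)

From HB Require Import structures.
From mathcomp Require Import all_boot all_order all_algebra fraction.
Set Implicit Arguments. Unset Strict Implicit. Unset Printing Implicit Defensive.
Import GRing.Theory.
Local Open Scope ring_scope.
Notation "x %:F" := (@FracField.tofrac _ x) : ring_scope.

Inductive term : Type :=
| TVar : nat -> term
| TZero : term
| TOne : term
| TAdd : term -> term -> term
| TOpp : term -> term
| TMul : term -> term -> term.

Inductive formula (k : nat) : Type :=
| FEq : term -> term -> formula k
| FPred : 'I_k -> term -> formula k
| FNeg : formula k -> formula k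
| FAnd : formula k -> formula k -> formula k
| FEx : nat -> formula k -> formula k.

Fixpoint eval_term (T : nzRingType) (e : nat -> T) (t : term) : T :=
  match t with
  | TVar n => e n
  | TZero => 0
  | TOne => 1
  | TAdd t1 t2 => eval_term e t1 + eval_term e t2
  | TOpp t1 => - eval_term e t1
  | TMul t1 t2 => eval_term e t1 * eval_term e t2
  end.

Definition upd (T : Type) (e : nat -> T) (n : nat) (x : T) : nat -> T :=
  fun m => if m == n then x else e m.

Fixpoint holds (T : nzRingType) (k : nat) (P : 'I_k -> T -> Prop)
    (e : nat -> T) (f : formula k) : Prop :=
  match f with
  | FEq t1 t2 => eval_term e t1 = eval_term e t2
  | FPred i t => P i (eval_term e t)
  | FNeg f1 => ~ holds P e f1
  | FAnd f1 f2 => holds P e f1 /\ holds P e f2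
  | FEx n f1 => exists x : T, holds P (upd e n x) f1
  end.

(* An ict-pattern of depth 2 and length n for phi(x;y), psi(x;z), with the
   object variable x being variable 0 and parameters given by environments
   a_i, b_j (all other variables are parameters). *)
Definition ict_pattern2 (T : nzRingType) (k : nat) (P : 'I_k -> T -> Prop)
    (phi psi : formula k) (n : nat) : Prop :=
  exists (a b : nat -> nat -> T),
    forall i j, (i < n)%N -> (j < n)%N ->
      exists c : T,
        (forall l, (l < n)%N -> (holds P (upd (a l) 0 c) phi <-> l = i)) /\
        (forall l, (l < n)%N -> (holds P (upd (b l) 0 c) psi <-> l = j)).

(* dp-minimality of the theory of the structure: no ict-pattern of depth 2 in
   one variable in any model of the theory; by compactness, equivalently for
   every pair of formulas there is a bound on the length of such patterns in
   the structure itself. *)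
Definition dp_minimal (T : nzRingType) (k : nat) (P : 'I_k -> T -> Prop) : Prop :=
  forall phi psi : formula k, exists n : nat, ~ ict_pattern2 P phi psi n.

Definition no_preds (T : nzRingType) : 'I_0 -> T -> Prop := fun _ _ => False.

(* The structure (K; R, O): predicate 0 is R (image in K), predicate 1 is O. *)
Definition KRO_preds (R : idomainType) (O : {fraction R} -> Prop)
  : 'I_2 -> {fraction R} -> Prop :=
  fun i x => if val i == 0%N then exists r : R, x = r%:F else O x.

Definition same (T : Type) (A B : T -> Prop) : Prop := forall x, A x <-> B x.

Definition ideal (R : comRingType) (I : R -> Prop) : Prop :=
  I 0 /\ (forall x y, I x -> I y -> I (x + y)) /\ (forall a x, I x -> I (a * x)).

Definition prime_ideal (R : comRingType) (I : R -> Prop) : Prop :=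
  ideal I /\ ~ I 1 /\ (forall x y, I (x * y) -> I x \/ I y).

Definition maximal_ideal (R : comRingType) (I : R -> Prop) : Prop :=
  ideal I /\ ~ I 1 /\
  (forall J, ideal J -> (forall x, I x -> J x) -> ~ J 1 -> forall x, J x -> I x).

Definition subring (K : comRingType) (O : K -> Prop) : Prop :=
  O 0 /\ O 1 /\ (forall x y, O x -> O y -> O (x + y)) /\
  (forall x, O x -> O (- x)) /\ (forall x y, O x -> O y -> O (x * y)).

Definition overring (R : idomainType) (O : {fraction R} -> Prop) : Prop :=
  subring O /\ (forall r : R, O r%:F).

Definition ideal_of (K : comRingType) (O I : K -> Prop) : Prop :=
  (forall x, I x -> O x) /\ I 0 /\ (forall x y, I x -> I y -> I (x + y)) /\
  (forall a x, O a -> I x -> I (a * x)).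

Definition prime_ideal_of (K : comRingType) (O I : K -> Prop) : Prop :=
  ideal_of O I /\ ~ I 1 /\
  (forall x y, O x -> O y -> I (x * y) -> I x \/ I y).

Definition maximal_ideal_of (K : comRingType) (O I : K -> Prop) : Prop :=
  ideal_of O I /\ ~ I 1 /\
  (forall J, ideal_of O J -> (forall x, I x -> J x) -> ~ J 1 -> forall x, J x -> I x).

Definition local_with_max (K : comRingType) (O m : K -> Prop) : Prop :=
  maximal_ideal_of O m /\ (forall m', maximal_ideal_of O m' -> same m' m).

Definition valuation_ring (K : fieldType) (O : K -> Prop) : Prop :=
  subring O /\ (forall x, x != 0 -> O x \/ O x^-1).

Definition localization (R : idomainType) (p : R -> Prop) : {fraction R} -> Prop :=
  fun x => exists a b : R, ~ p b /\ x = a%:F / b%:F.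

Definition image_in_frac (R : idomainType) (p : R -> Prop) : {fraction R} -> Prop :=
  fun x => exists r : R, p r /\ x = r%:F.

(* If [G] and [H] are additive subgroups whose cosets [y + H] and [y + G] are
   uniformly definable, then elements [A i] of [G] pairwise incongruent modulo [H],
   together with elements [B j] of [H] pairwise incongruent modulo [G], give an
   ict-pattern witnessed by the [A i + B j]; dp-minimality bounds the length of such
   families.  In [R] this is applied to ideals [aR] and [bR].  The families
   [u^N (1 - u)^i] and [(1 - u)^N u^j] show that [u] or [1 - u] is a unit, so [R] is
   local.  For a prime [p <> M] and [s] in [M] but not in [p], the families [a s^i] and
   [b s^j] show that [b] divides [a t] or [a] divides [b t] for some [t] outside [p], so
   [R_p] is a valuation ring, and that every [f] outside [p] divides every element of
   [p].  A local overring [O] not dominating [R] is then [R_p] for [p] the trace of its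
   maximal ideal.  For a dominating [O], the same argument in [(K; R, O)] with the
   subgroups [O] and [s^-N R] and the families [x^i], [s^-j] shows [O <= R_p], and then
   [p R_p] meets [O] in [p], which is therefore a prime of [O]. *)

From mathcomp Require Import all_boot all_order all_algebra fraction generic_quotient.
From mathcomp Require Import ring zify.
From mathcomp Require Import classical_sets.
From Stdlib Require Import Classical.
Set Implicit Arguments. Unset Strict Implicit. Unset Printing Implicit Defensive.
Import GRing.Theory.
Local Open Scope ring_scope.
Local Open Scope classical_set_scope.

Definition subgroup (T : zmodType) (G : T -> Prop) : Prop :=
  forall x y, G x -> G y -> G (x - y).

Definition no_coset_pattern (T : zmodType) (G H : T -> Prop) (n : nat) : Prop :=
  forall A B : nat -> T,
  (forall i, (i < n)%N -> G (A i)) -> (forall j, (j < n)%N -> H (B j)) ->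
  (forall i l, (i < l)%N -> (l < n)%N -> ~ H (A i - A l)) ->
  (forall j l, (j < l)%N -> (l < n)%N -> ~ G (B j - B l)) -> False.

Lemma subgroup0 (T : zmodType) (G : T -> Prop) x : subgroup G -> G x -> G 0.
Proof. by move=> sG Gx; rewrite -(subrr x); exact: sG. Qed.

Lemma subgroup_subC (T : zmodType) (G : T -> Prop) x y :
  subgroup G -> G (x - y) -> G (y - x).
Proof.
move=> sG Gxy; rewrite -opprB -sub0r.
exact: sG (subgroup0 sG Gxy) Gxy.
Qed.

Lemma subgroup_ltn_inj (T : zmodType) (G : T -> Prop) (A : nat -> T) n :
  subgroup G -> (forall i l, (i < l)%N -> (l < n)%N -> ~ G (A i - A l)) ->
  forall i l, (i < n)%N -> (l < n)%N -> G (A i - A l) -> i = l.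
Proof.
move=> sG Adiff i l ilt llt GA; case: (ltngtP i l) => // [il|li].
- by case: (Adiff i l il llt GA).
- by case: (Adiff l i li ilt (subgroup_subC sG GA)).
Qed.

(* The witness for the pair (i, j) is [A i + B j]: it lies in the H-coset of
   [A i] and the G-coset of [B j], and in no other coset of either family. *)
Lemma ict_pattern2_of_cosets (T : comNzRingType) k (P : 'I_k -> T -> Prop)
    (phi psi : formula k) (G H : T -> Prop) (ea eb : T -> nat -> T) n :
  subgroup G -> subgroup H ->
  (forall y c, holds P (upd (ea y) 0 c) phi <-> H (c - y)) ->
  (forall y c, holds P (upd (eb y) 0 c) psi <-> G (c - y)) ->
  ~ ict_pattern2 P phi psi n -> no_coset_pattern G H n.
Proof.
move=> sG sH phiE psiE nopat A B GA HB Adiff Bdiff; apply: nopat.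
have Ainj := subgroup_ltn_inj sH Adiff; have Binj := subgroup_ltn_inj sG Bdiff.
exists (fun l => ea (A l)), (fun l => eb (B l)) => i j ilt jlt.
exists (A i + B j); split=> l llt; [rewrite phiE | rewrite psiE]; split.
- move=> HA; apply/esym/Ainj => //.
  have -> : A i - A l = A i + B j - A l - B j by ring.
  exact: sH HA (HB j jlt).
- move=> ->; have -> : A i + B j - A i = B j by ring.
  exact: HB.
- move=> GB; apply/esym/Binj => //.
  have -> : B j - B l = A i + B j - B l - A i by ring.
  exact: sG GB (GA i ilt).
- move=> ->; have -> : A i + B j - B j = A i by ring.
  exact: GA.
Qed.

Definition env2 (T : nzRingType) (y z : T) : nat -> T :=
  upd (upd (fun _ => 0) 1 y) 2 z.

Definition dvd_coset_formula k : formula k :=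
  FEx 3 (FEq k (TAdd (TVar 0) (TOpp (TVar 1))) (TMul (TVar 2) (TVar 3))).

Definition dvdr (R : comNzRingType) (a x : R) : Prop := exists t, x = a * t.

Lemma dvdr_subgroup (R : comNzRingType) (a : R) : subgroup (dvdr a).
Proof. by move=> _ _ [s ->] [t ->]; exists (s - t); ring. Qed.

Lemma dp_minimal_no_dvdr_pattern (R : comNzRingType) :
  dp_minimal (@no_preds R) ->
  exists n, forall a b : R, no_coset_pattern (dvdr a) (dvdr b) n.
Proof.
move=> /(_ (dvd_coset_formula 0) (dvd_coset_formula 0)) [n nopat].
exists n => a b.
apply: (ict_pattern2_of_cosets (ea := fun y => env2 y b) (eb := fun y => env2 y a)
  _ _ _ _ nopat) => //; exact: dvdr_subgroup.
Qed.

Lemma dvdr_1B_mul (R : comNzRingType) (v x y : R) :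
  dvdr v (1 - x) -> dvdr v (1 - y) -> dvdr v (1 - x * y).
Proof. by move=> [s ex] [t ey]; exists (s + x * t); rewrite mulrDr mulrCA -ex -ey; ring. Qed.

Lemma dvdr_1B_expr (R : comNzRingType) (v x : R) k :
  dvdr v (1 - x) -> dvdr v (1 - x ^+ k).
Proof.
move=> vx; elim: k => [|k IH]; first by exists 0; rewrite expr0 subrr mulr0.
by rewrite exprS; exact: dvdr_1B_mul.
Qed.

Lemma dvdr_add (R : comNzRingType) (v x y : R) : dvdr v x -> dvdr v y -> dvdr v (x + y).
Proof. by move=> [s ->] [t ->]; exists (s + t); rewrite mulrDr. Qed.

Lemma ideal_mull (R : comNzRingType) (I : R -> Prop) a x : ideal I -> I x -> I (a * x).
Proof. by move=> [_ [_ IM]]; exact: IM. Qed.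

Lemma prime_ideal_notin_mul (R : comNzRingType) (p : R -> Prop) x y :
  prime_ideal p -> ~ p x -> ~ p y -> ~ p (x * y).
Proof. by move=> [_ [_ pM]] px py /pM []. Qed.

Lemma prime_ideal_notin_expr (R : comNzRingType) (p : R -> Prop) x k :
  prime_ideal p -> ~ p x -> ~ p (x ^+ k).
Proof.
move=> pp px; elim: k => [|k IH]; first by rewrite expr0; case: pp => _ [].
by rewrite exprS; exact: prime_ideal_notin_mul.
Qed.

Lemma prime_ideal_neq0 (R : comNzRingType) (p : R -> Prop) x :
  prime_ideal p -> ~ p x -> x != 0.
Proof. by move=> [[p0 _] _] px; apply: contra_not_neq px => ->. Qed.

Lemma prime_ideal_notin_unit (R : comUnitRingType) (p : R -> Prop) x :
  prime_ideal p -> x \is a GRing.unit -> ~ p x.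
Proof.
move=> [idp [p1 _]] /unitrPr [w xw] px; apply: p1.
by rewrite -xw mulrC; exact: ideal_mull.
Qed.

Local Open Scope quotient_scope.
Lemma frac_rep (R : idomainType) (x : {fraction R}) :
  exists a b : R, b != 0 /\ x = a%:F / b%:F.
Proof.
elim/quotW: x => r.
exists (\n_r), (\d_r); split; first exact: denom_ratioP.
apply: (@mulIf _ (\d_r)%:F); first by rewrite tofrac_eq0 denom_ratioP.
rewrite mulfVK ?tofrac_eq0 ?denom_ratioP // !piE.
apply/eqmodP; rewrite /= FracField.equivfE /FracField.mulf.
rewrite !numden_Ratio ?oner_eq0 ?mulf_neq0 ?denom_ratioP //; try exact: oner_neq0.
by rewrite !mulr1 mulrC.
Qed.
Local Close Scope quotient_scope.

Lemma frac_eq (R : idomainType) (a b c d : R) :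
  b != 0 -> d != 0 -> a * d = c * b -> a%:F / b%:F = c%:F / d%:F.
Proof. by move=> b0 d0 e; apply/eqP; rewrite eqr_div ?tofrac_eq0 // -!tofracM e. Qed.

Lemma tofrac_div_mul (R : idomainType) (f g : R) : f != 0 -> (f * g)%:F / f%:F = g%:F.
Proof. by move=> f0; rewrite tofracM mulrAC mulfV ?mul1r ?tofrac_eq0. Qed.

Definition localized_ideal (R : idomainType) (p : R -> Prop) : {fraction R} -> Prop :=
  fun x => exists a b : R, p a /\ ~ p b /\ x = a%:F / b%:F.

Lemma localization0 (R : idomainType) (p : R -> Prop) : prime_ideal p -> localization p 0.
Proof. by move=> [_ [p1 _]]; exists 0, 1; split => //; rewrite tofrac0 mul0r. Qed.

(* Zorn is applied to the sets [A] for which [I `|` A] is a proper ideal, so that the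
   empty chain, whose union is [set0], is harmless. *)
Lemma ideal_of_sub_maximal (K : comNzRingType) (O I : K -> Prop) :
  ideal_of O I -> ~ I 1 -> exists m, maximal_ideal_of O m /\ (forall x, I x -> m x).
Proof.
move=> idI I1.
pose P (A : set K) := ideal_of O (I `|` A) /\ ~ (I `|` A) 1.
have P0 : P set0 by rewrite /P setU0.
have [A [[idA A1] Amax]] : exists A, P A /\ forall B, A `<` B -> ~ P B.
  apply: Zorn_bigcup => F FP Ftot; set U := \bigcup_(X in F) X.
  have sub X : F X -> I `|` X `<=` I `|` U.
    by move=> FX; apply: setUS; exact: bigcup_sup.
  have pair x y : (I `|` U) x -> (I `|` U) y ->
      exists X, [/\ P X, I `|` X `<=` I `|` U, (I `|` X) x & (I `|` X) y].
    move=> [Ix|[X FX Xx]] [Iy|[Y FY Yy]].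
    - by exists set0; split => //; [rewrite setU0; exact: subsetUl | left | left].
    - by exists Y; split; [exact: FP | exact: sub | left | right].
    - by exists X; split; [exact: FP | exact: sub | right | left].
    - case: (Ftot X Y FX FY) => [XY|YX].
      + by exists Y; split; [exact: FP | exact: sub | right; exact: XY | right].
      + by exists X; split; [exact: FP | exact: sub | right | right; exact: YX].
  split; first split.
  - by move=> x Ux; have [X [[[XO _] _] _ Xx _]] := pair x x Ux Ux; exact: XO.
  - split; first by left; case: idI => _ [].
    split=> [x y Ux Uy|a x Oa Ux].
    + by have [X [[[_ [_ [XD _]]] _] XU Xx Xy]] := pair x y Ux Uy; apply: XU; exact: XD.
    + by have [X [[[_ [_ [_ XM]]] _] XU Xx _]] := pair x x Ux Ux; apply: XU; exact: XM.
  - by move=> U1; have [X [[_ X1] _ ? _]] := pair 1 1 U1 U1.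
exists (I `|` A); split; last by move=> x Ix; left.
do 2!split=> //; move=> J idJ AJ J1 x Jx; apply: NNPP => nAx.
have IJ : I `|` J = J by apply/setUidPr => y Iy; apply: AJ; left.
apply: (Amax J); last by rewrite /P IJ.
split=> [y Ay|JA]; first by apply: AJ; right.
by apply: nAx; right; exact: JA.
Qed.

Lemma local_subring_unit (K : fieldType) (O m : K -> Prop) y :
  subring O -> local_with_max O m -> O y -> ~ m y -> O y^-1.
Proof.
move=> [O0 [O1 [OD [_ OM]]]] [_ max_m] Oy my; apply: NNPP => Oyi.
pose J z := exists2 o, O o & z = y * o.
have idJ : ideal_of O J.
  split; first by move=> _ [o Oo ->]; exact: OM.
  split; first by exists 0; rewrite ?mulr0.
  split=> [_ _ [o1 O1o ->] [o2 O2o ->]|a _ Oa [o Oo ->]].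
  - by exists (o1 + o2); [exact: OD | rewrite mulrDr].
  - by exists (a * o); [exact: OM | rewrite mulrCA].
have J1 : ~ J 1.
  move=> [o Oo yo]; apply: Oyi.
  have y0 : y != 0.
    by apply: contraTneq isT => y0; move: yo; rewrite y0 mul0r => /eqP; rewrite oner_eq0.
  by rewrite -[y^-1]mulr1 yo mulKf.
have [m' [maxm' Jm']] := ideal_of_sub_maximal idJ J1.
by apply: my; apply/(max_m m' maxm'); apply: Jm'; exists 1; rewrite ?mulr1.
Qed.

Definition in_mul_R (R : idomainType) (Z x : {fraction R}) : Prop :=
  exists r : R, x = Z * r%:F.

Lemma in_mul_R_subgroup (R : idomainType) (Z : {fraction R}) : subgroup (in_mul_R Z).
Proof. by move=> _ _ [r ->] [s ->]; exists (r - s); rewrite tofracB mulrBr. Qed.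

Lemma subring_subgroup (K : comNzRingType) (O : K -> Prop) : subring O -> subgroup O.
Proof. by move=> [_ [_ [OD [ON _]]]] x y Ox Oy; apply: OD => //; exact: ON. Qed.

Definition pred_dvd_coset_formula k (i : 'I_k) : formula k :=
  FEx 3 (FAnd (FPred i (TVar 3))
              (FEq k (TAdd (TVar 0) (TOpp (TVar 1))) (TMul (TVar 2) (TVar 3)))).

Definition pred_coset_formula k (i : 'I_k) : formula k :=
  FPred i (TAdd (TVar 0) (TOpp (TVar 1))).

Lemma dp_minimal_KRO_no_pattern (R : idomainType) (O : {fraction R} -> Prop) :
  subring O -> dp_minimal (KRO_preds O) ->
  exists k, forall Z, no_coset_pattern O (in_mul_R Z) k.
Proof.
move=> sO /(_ (pred_dvd_coset_formula ord0) (pred_coset_formula ord_max)) [k nopat].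
exists k => Z; apply: (ict_pattern2_of_cosets (ea := fun y => env2 y Z)
  (eb := fun y => env2 y 0) _ _ _ _ nopat).
- exact: subring_subgroup.
- exact: in_mul_R_subgroup.
- move=> y c /=; split=> [[t [[r tr] e]]|[r e]]; first by exists r; rewrite -tr.
  by exists r%:F; split; first exists r.
- by [].
Qed.

Lemma subring_expr (K : comNzRingType) (O : K -> Prop) x k :
  subring O -> O x -> O (x ^+ k).
Proof.
move=> [_ [O1 [_ [_ OM]]]] Ox; elim: k => [|k IH]; first by rewrite expr0.
by rewrite exprS; exact: OM.
Qed.

Lemma ideal_of_expr (K : comNzRingType) (O m : K -> Prop) s k :
  subring O -> ideal_of O m -> m s -> m (s ^+ k.+1).
Proof.
move=> sO [mO [_ [_ mM]]] ms; rewrite exprS mulrC.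
by apply: mM => //; apply: subring_expr => //; exact: mO.
Qed.

(* [s ^+ l * (s^-1 ^+ j - s^-1 ^+ l) = s ^+ (l - j) - 1] would put [1] in [m]. *)
Lemma not_subring_inv_expr_diff (K : fieldType) (O m : K -> Prop) s j l :
  subring O -> ideal_of O m -> ~ m 1 -> m s -> s != 0 -> (j < l)%N ->
  ~ O (s^-1 ^+ j - s^-1 ^+ l).
Proof.
move=> sO idm m1 ms s0 jl Odiff; have [_ [_ [mD mM]]] := idm.
have [k El] : exists k, l = (j + k.+1)%N by exists (l - j.+1)%N; lia.
have mdiff : m (s ^+ k.+1 - 1).
  have -> : s ^+ k.+1 - 1 = (s^-1 ^+ j - s^-1 ^+ l) * s ^+ l.
    by rewrite El !exprVn !exprD; field; rewrite !expf_neq0.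
  by apply: mM Odiff _; rewrite El addnS; exact: ideal_of_expr sO idm ms.
apply: m1; have -> : 1 = s ^+ k.+1 + (-1) * (s ^+ k.+1 - 1) by ring.
apply: mD; first exact: ideal_of_expr sO idm ms.
by apply: mM => //; case: sO => [_ [O1 [_ [ON _]]]]; exact: ON.
Qed.

(* With [x = d / c], clearing denominators turns
   [x ^+ i - x ^+ l = r / s ^+ N] into [s ^+ N * (d ^+ i * c ^+ (l - i) - d ^+ l) = r * c ^+ l]. *)
Lemma not_in_mul_R_expr_diff (R : idomainType) (p : R -> Prop) c d s N i l :
  prime_ideal p -> p c -> ~ p d -> ~ p s -> c != 0 -> (i < l)%N ->
  ~ in_mul_R (s%:F ^+ N)^-1 ((d%:F / c%:F) ^+ i - (d%:F / c%:F) ^+ l).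
Proof.
move=> pp pc pd ps c0 il [r e]; have [idp [_ pM]] := pp.
have [k El] : exists k, l = (i + k.+1)%N by exists (l - i.+1)%N; lia.
have s0 := prime_ideal_neq0 pp ps.
have eR : s ^+ N * (d ^+ i * c ^+ k.+1 - d ^+ l) = r * c ^+ l.
  apply/eqP; rewrite -tofrac_eq; apply/eqP.
  rewrite !tofracM tofracB !tofracM !tofracXn.
  have Xc n : (d%:F / c%:F) ^+ n * c%:F ^+ n = d%:F ^+ n.
    by rewrite -exprMn divfK // tofrac_eq0.
  have -> : r%:F = s%:F ^+ N * ((d%:F / c%:F) ^+ i - (d%:F / c%:F) ^+ l).
    by rewrite e mulVKf // expf_neq0 // tofrac_eq0.
  rewrite -mulrA mulrBl -(Xc l); congr (_ * (_ - _)).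
  by rewrite El exprD mulrA Xc.
have pdiff : p (d ^+ i * c ^+ k.+1 - d ^+ l).
  have : p (s ^+ N * (d ^+ i * c ^+ k.+1 - d ^+ l)).
    by rewrite eR El addnS exprSr mulrA; exact: ideal_mull idp pc.
  by case/pM => // /(prime_ideal_notin_expr pp ps).
apply: (prime_ideal_notin_expr (k := l) pp pd).
have -> : d ^+ l = d ^+ i * c ^+ k.+1 + (-1) * (d ^+ i * c ^+ k.+1 - d ^+ l) by ring.
have [_ [pD _]] := idp; apply: pD; last exact: ideal_mull.
by rewrite exprSr mulrA; exact: ideal_mull idp pc.
Qed.

Section DpMinimalDomain.
Variables (R : idomainType) (n : nat).
Hypothesis no_pattern : forall a b : R, no_coset_pattern (dvdr a) (dvdr b) n.

Lemma dvdr1_unit (v : R) : dvdr v 1 -> v \is a GRing.unit.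
Proof. by move=> [t e]; apply/unitrPr; exists t. Qed.

(* [u ^+ n * (1 - v ^+ (l - i))] is congruent to 1 modulo [v] since [u = 1 - v], so
   [v] dividing it would make [v] a unit. *)
Lemma not_dvdr_expr_diff (u v : R) i l : u + v = 1 -> v \isn't a GRing.unit -> v != 0 ->
  (i < l)%N -> (l < n)%N -> ~ dvdr (v ^+ n) (u ^+ n * v ^+ i - u ^+ n * v ^+ l).
Proof.
move=> uv1 vNU v0 il ln [t e]; move/negP: vNU; apply; apply: dvdr1_unit.
have [k El] : exists k, l = (i + k.+1)%N by exists (l - i.+1)%N; lia.
have [m En] : exists m, n = (i + m.+1)%N by exists (n - i.+1)%N; lia.
have e' : v ^+ i * (u ^+ n * (1 - v ^+ k.+1)) = v ^+ i * (v * (v ^+ m * t)).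
  have -> : v ^+ i * (v * (v ^+ m * t)) = v ^+ n * t by rewrite En exprD exprS; ring.
  by rewrite -e El exprD exprS; ring.
have vdiv : dvdr v (u ^+ n * (1 - v ^+ k.+1)).
  by exists (v ^+ m * t); apply: (mulfI (expf_neq0 i v0)).
have vcong : dvdr v (1 - u ^+ n * (1 - v ^+ k.+1)).
  apply: dvdr_1B_mul; first by apply: dvdr_1B_expr; exists 1; rewrite mulr1 -uv1; ring.
  by exists (v ^+ k); rewrite exprS; ring.
by have := dvdr_add vcong vdiv; rewrite subrK.
Qed.

Lemma unitr_or_unitr1B (u : R) : u \is a GRing.unit \/ 1 - u \is a GRing.unit.
Proof.
case: (boolP (u \is a GRing.unit)) => uU; first by left.
case: (boolP (1 - u \is a GRing.unit)) => vU; first by right.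
exfalso.
have u0 : u != 0 by apply: contraNneq vU => ->; rewrite subr0 unitr1.
have v0 : 1 - u != 0.
  by apply: contraNneq uU => /eqP; rewrite subr_eq0 => /eqP <-; rewrite unitr1.
apply: (@no_pattern (u ^+ n) ((1 - u) ^+ n) (fun i => u ^+ n * (1 - u) ^+ i)
          (fun j => (1 - u) ^+ n * u ^+ j)) => [i _|j _|i l il ln|i l il ln].
- by exists ((1 - u) ^+ i).
- by exists (u ^+ j).
all: by apply: not_dvdr_expr_diff => //; ring.
Qed.

Variable M : R -> Prop.
Hypothesis maxM : maximal_ideal M.

Lemma maximal_ideal_unitE x : M x <-> x \isn't a GRing.unit.
Proof.
have [[M0 [MD MM]] [M1 Mmax]] := maxM.
have unit_notin y : y \is a GRing.unit -> ~ M y.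
  by move=> /unitrPr [w yw] My; apply: M1; rewrite -yw mulrC; exact: MM.
split=> [Mx|xNU]; first by apply/negP => /unit_notin.
apply: NNPP => NMx.
pose J z := exists m w, M m /\ z = m + x * w.
have idJ : ideal J.
  split; first by exists 0, 0; split => //; ring.
  split=> [_ _ [m1 [w1 [M1m ->]]] [m2 [w2 [M2m ->]]]|a _ [m [w [Mm ->]]]].
  - by exists (m1 + m2), (w1 + w2); split; [exact: MD | ring].
  - by exists (a * m), (a * w); split; [exact: MM | ring].
have [m [w [Mm e1]]] : J 1.
  apply: NNPP => NJ1; apply: NMx; apply: (Mmax J idJ _ NJ1).
    by move=> y My; exists y, 0; split => //; ring.
  by exists 0, 1; split => //; ring.
case: (unitr_or_unitr1B m) => [/unit_notin //|/unitrPr [z ez]].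
move/negP: xNU; apply; apply/unitrPr; exists (w * z).
by rewrite mulrA -ez e1; ring.
Qed.

Lemma unitr1B_of_max x : M x -> 1 - x \is a GRing.unit.
Proof.
move=> /maximal_ideal_unitE xNU.
by case: (unitr_or_unitr1B x) => // xU; rewrite xU in xNU.
Qed.

Lemma expr_diff_factor a s i l : M s -> (i < l)%N ->
  exists2 w, w \is a GRing.unit & a * s ^+ i - a * s ^+ l = a * s ^+ i * w.
Proof.
move=> Ms il; have [k ->] : exists k, l = (i + k.+1)%N by exists (l - i.+1)%N; lia.
exists (1 - s ^+ k.+1); last by rewrite exprD; ring.
by apply: unitr1B_of_max; rewrite exprSr; apply: ideal_mull => //; case: maxM.
Qed.

Section Prime.
Variable p : R -> Prop.
Hypothesis prime_p : prime_ideal p.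

Lemma prime_sub_max x : p x -> M x.
Proof. by move=> px; apply/maximal_ideal_unitE/negP => /(prime_ideal_notin_unit prime_p). Qed.

Lemma dvdr_prime x f : p x -> ~ p f -> exists2 g, p g & x = f * g.
Proof.
move=> px pf; suff [g xfg] : dvdr f x.
  by exists g => //; move: px; rewrite xfg => /(proj2 (proj2 prime_p)) [].
case: (boolP (f \is a GRing.unit)) => [/unitrPr [w fw]|/maximal_ideal_unitE Mf].
  by exists (w * x); rewrite mulrA fw mul1r.
have f0 := prime_ideal_neq0 prime_p pf.
apply: NNPP => nfx.
apply: (@no_pattern x (f ^+ n) (fun i => x * f ^+ i) (fun j => f ^+ n * f ^+ j))
  => [i _|j _|i l il ln|i l il ln] /=.
- by exists (f ^+ i).
- by exists (f ^+ j).
- have [w wU ->] := expr_diff_factor x Mf il => -[t e].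
  apply: nfx; have [m En] : exists m, n = (i + m.+1)%N by exists (n - i.+1)%N; lia.
  have e' : f ^+ i * (x * w) = f ^+ i * (f * (f ^+ m * t)).
    by rewrite mulrA [f ^+ i * x]mulrC e En exprD exprS; ring.
  by exists (f ^+ m * t / w); rewrite -(mulrK wU x) (mulfI (expf_neq0 i f0) e'); ring.
- have [w wU ->] := expr_diff_factor (f ^+ n) Mf il => -[t e].
  have : p (x * t) by rewrite mulrC; apply: ideal_mull => //; case: prime_p.
  rewrite -e; apply: prime_ideal_notin_mul => //; last exact: prime_ideal_notin_unit.
  by rewrite -exprD; exact: prime_ideal_notin_expr.
Qed.

Lemma image_in_frac_div e f : p e -> ~ p f -> image_in_frac p (e%:F / f%:F).
Proof.
move=> pe pf; have [g pg ->] := dvdr_prime pe pf.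
by exists g; split; last rewrite tofrac_div_mul // (prime_ideal_neq0 prime_p pf).
Qed.

Hypothesis p_neq_M : ~ same p M.

Lemma exists_max_notin_prime : exists s, M s /\ ~ p s.
Proof.
apply: NNPP => none; apply: p_neq_M => x; split; first exact: prime_sub_max.
by move=> Mx; apply: NNPP => px; apply: none; exists x.
Qed.

Lemma dvdr_cofactor_total a b : exists t, ~ p t /\ (dvdr b (a * t) \/ dvdr a (b * t)).
Proof.
have [s [Ms ps]] := exists_max_notin_prime.
apply: NNPP => none.
have cofactor c i l : (i < l)%N -> exists t, ~ p t /\ c * s ^+ i - c * s ^+ l = c * t.
  move=> il; have [w wU ->] := expr_diff_factor c Ms il.
  exists (s ^+ i * w); split; last by rewrite mulrA.
  by apply: prime_ideal_notin_mul; [|exact: prime_ideal_notin_expr|exact: prime_ideal_notin_unit].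
apply: (@no_pattern a b (fun i => a * s ^+ i) (fun j => b * s ^+ j))
  => [i _|j _|i l il _|i l il _] /=.
- by exists (s ^+ i).
- by exists (s ^+ j).
- by have [t [pt ->]] := cofactor a _ _ il => dv; apply: none; exists t; split => //; left.
- by have [t [pt ->]] := cofactor b _ _ il => dv; apply: none; exists t; split => //; right.
Qed.

Lemma localization_or_inv_localized x : localization p x \/ localized_ideal p x^-1.
Proof.
have [a [b [b0 ->]]] := frac_rep x.
have [t [pt [[r ar]|[r br]]]] := dvdr_cofactor_total a b;
  have t0 := prime_ideal_neq0 prime_p pt.
  by left; exists r, t; split => //; apply: frac_eq => //; rewrite ar mulrC.
have a0 : a != 0.
  apply: contraTneq isT => a0; move: br; rewrite a0 mul0r => /eqP.
  by rewrite mulf_eq0 (negbTE b0) (negbTE t0).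
rewrite invf_div; case: (classic (p r)) => pr.
  by right; exists r, t; split => //; split => //; apply: frac_eq => //; rewrite br mulrC.
left; exists t, r; split => //; apply: frac_eq => //; first exact: prime_ideal_neq0 pr.
by rewrite -br mulrC.
Qed.

End Prime.

Lemma nondominant_local_overring (O m : {fraction R} -> Prop) :
  overring O -> local_with_max O m -> (exists r : R, M r /\ ~ m r%:F) ->
  valuation_ring O /\
  exists p : R -> Prop, prime_ideal p /\ ~ same p M /\ same O (localization p).
Proof.
move=> [sO Ofrac] locO [r0 [Mr0 mr0]].
have [_ [_ [_ [_ OM]]]] := sO; have [[[_ [m0 [mD mM]]] [m1 _]] _] := locO.
have Ounit := local_subring_unit sO locO.
pose p r := m r%:F.
have prime_p : prime_ideal p.
  split; first split; rewrite /p ?tofrac0 //.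
    by split=> [x y|a x]; rewrite ?tofracD ?tofracM; [exact: mD | exact/mM/Ofrac].
  split; first by rewrite tofrac1.
  move=> x y; rewrite tofracM => mxy; apply: NNPP => /not_or_and [mx my].
  have x0 : x%:F != 0 by apply: contra_not_neq mx => ->.
  have y0 : y%:F != 0 by apply: contra_not_neq my => ->.
  apply: m1; rewrite -(mulVf (mulf_neq0 x0 y0)); apply: mM => //.
  by rewrite invfM; apply: OM; exact: Ounit.
have p_neq_M : ~ same p M by move=> pM; apply/mr0/pM.
have Rp_sub_O x : localization p x -> O x.
  by move=> [a [b [pb ->]]]; apply: OM; [exact: Ofrac | exact: Ounit].
have O_sub_Rp x : O x -> localization p x.
  move=> Ox; case: (eqVneq x 0) => [->|x0]; first exact: localization0.
  case: (localization_or_inv_localized prime_p p_neq_M x) => // -[c [d [pc [pd ex]]]].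
  have d0 : d%:F != 0 by rewrite tofrac_eq0 (prime_ideal_neq0 prime_p pd).
  exfalso; apply: pd; rewrite /p.
  have -> : d%:F = x * c%:F.
    by rewrite -(divfK d0 c%:F) -ex mulrA mulfV // mul1r.
  exact: mM.
split.
  split=> // x x0; case: (localization_or_inv_localized prime_p p_neq_M x).
    by left; exact: Rp_sub_O.
  by move=> [a [b [_ [pb e]]]]; right; apply: Rp_sub_O; exists a, b.
by exists p; split=> //; split=> // x; split; [exact: O_sub_Rp | exact: Rp_sub_O].
Qed.

Section DominantOverring.
Variables (O m : {fraction R} -> Prop) (k : nat).
Hypotheses (overO : overring O) (maxm : maximal_ideal_of O m).
Hypothesis dominant : forall r : R, M r -> m r%:F.
Hypothesis no_Kpattern : forall Z, no_coset_pattern O (in_mul_R Z) k.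

(* If [x^-1 = c / d] lay in [p R_p], the powers [x ^+ i] and [s^-1 ^+ j], for some
   [s] in [M] but not in [p], would form a forbidden pattern. *)
Lemma dominant_sub_localization p x :
  prime_ideal p -> ~ same p M -> O x -> localization p x.
Proof.
move=> pp pM Ox; have sO := overO.1; have [idm [m1 _]] := maxm.
case: (eqVneq x 0) => [->|x0]; first exact: localization0.
case: (localization_or_inv_localized pp pM x) => // -[c [d [pc [pd ex]]]].
have [s [Ms ps]] := exists_max_notin_prime pp pM.
have s0 : s%:F != 0 by rewrite tofrac_eq0 (prime_ideal_neq0 pp ps).
have c0 : c != 0 by apply: contra_neq (invr_neq0 x0); rewrite ex => ->; rewrite tofrac0 mul0r.
have xdc : x = d%:F / c%:F by rewrite -[x]invrK ex invf_div.
exfalso; apply: (@no_Kpattern (s%:F ^+ k)^-1 (fun i => x ^+ i) (fun j => s%:F^-1 ^+ j))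
  => [i _|j jk|i l il _|j l jl _] /=.
- exact: subring_expr.
- exists (s ^+ (k - j)); rewrite tofracXn exprVn -{1}(subnKC (ltnW jk)) exprD.
  by rewrite invfM mulfVK // expf_neq0.
- by rewrite xdc; exact: not_in_mul_R_expr_diff pp pc pd ps c0 il.
- exact: not_subring_inv_expr_diff (dominant Ms) s0 jl.
Qed.

Lemma prime_ideal_of_image p : prime_ideal p -> ~ same p M ->
  prime_ideal_of O (image_in_frac p).
Proof.
move=> pp pM; have [[p0 [pD _]] [p1 pP]] := pp.
have Rp := dominant_sub_localization pp pM.
split; [split | split].
- by move=> _ [r [_ ->]]; exact: overO.2.
- split; first by exists 0; rewrite tofrac0.
  split=> [_ _ [r1 [pr1 ->]] [r2 [pr2 ->]]|a _ Oa [r [pr ->]]].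
    by exists (r1 + r2); rewrite tofracD; split => //; exact: pD.
  have [e [f [pf ->]]] := Rp a Oa.
  rewrite mulrAC -tofracM; apply: image_in_frac_div => //.
  exact: ideal_mull (proj1 pp) pr.
- by move=> [r [pr /eqP]]; rewrite -tofrac1 tofrac_eq => /eqP r1; apply: p1; rewrite r1.
move=> x y Ox Oy [r [pr exy]].
have [e1 [f1 [pf1 ex]]] := Rp x Ox; have [e2 [f2 [pf2 ey]]] := Rp y Oy.
have f0 := mulf_neq0 (prime_ideal_neq0 pp pf1) (prime_ideal_neq0 pp pf2).
have : p (e1 * e2).
  suff -> : e1 * e2 = (f1 * f2) * r by exact: ideal_mull (proj1 pp) pr.
  apply/eqP; rewrite -tofrac_eq; apply/eqP.
  rewrite !tofracM -exy ex ey mulf_div [RHS]mulrC divfK //.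
  by rewrite -tofracM tofrac_eq0.
by case/pP => [pe|pe]; [left; rewrite ex | right; rewrite ey]; exact: image_in_frac_div.
Qed.

End DominantOverring.
End DpMinimalDomain.

Lemma prime_ideal_of_contract (R : idomainType) (O q : {fraction R} -> Prop) :
  overring O -> prime_ideal_of O q -> (forall x, q x -> exists r : R, x = r%:F) ->
  exists p : R -> Prop, prime_ideal p /\ same q (image_in_frac p).
Proof.
move=> [_ Ofrac] [[_ [q0 [qD qM]]] [q1 qP]] qR.
exists (fun r => q r%:F); split.
  split; first split; rewrite ?tofrac0 //.
    by split=> [x y|a x]; rewrite ?tofracD ?tofracM; [exact: qD | exact/qM/Ofrac].
  by split; rewrite ?tofrac1 // => x y; rewrite tofracM; apply: qP; exact: Ofrac.
move=> x; split=> [qx|[r [qr ->]]] //.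
by have [r xr] := qR x qx; exists r; rewrite -xr.
Qed.

Theorem mainTheorem18 (R : idomainType) (M : R -> Prop) :
  dp_minimal (@no_preds R) -> maximal_ideal M ->
  (* (1) *)
  (forall O m : {fraction R} -> Prop,
      overring O -> local_with_max O m ->
      (exists r : R, M r /\ ~ m r%:F) ->
      valuation_ring O /\
      exists p : R -> Prop, prime_ideal p /\ ~ same p M /\ same O (localization p))
  /\
  (* (2) *)
  (forall O m : {fraction R} -> Prop,
      overring O -> valuation_ring O -> maximal_ideal_of O m ->
      (forall r : R, M r -> m r%:F) ->
      dp_minimal (KRO_preds O) ->
      (forall p : R -> Prop, prime_ideal p -> ~ same p M ->
         forall x, O x -> localization p x) /\
      (forall p : R -> Prop, prime_ideal p -> ~ same p M ->
         prime_ideal_of O (image_in_frac p)) /\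
      (forall q : {fraction R} -> Prop, prime_ideal_of O q ->
         (forall x, q x -> image_in_frac M x) -> ~ same q (image_in_frac M) ->
         exists p : R -> Prop, prime_ideal p /\ same q (image_in_frac p))).
Proof.
move=> dpR maxM; have [n no_pattern] := dp_minimal_no_dvdr_pattern dpR.
split=> [O m overO locO nondom|O m overO _ maxm dominant dpK].
  exact: (nondominant_local_overring no_pattern maxM overO locO nondom).
have [k no_Kpattern] := dp_minimal_KRO_no_pattern overO.1 dpK.
have sub_Rp := dominant_sub_localization no_pattern maxM overO maxm dominant no_Kpattern.
have prime_image := prime_ideal_of_image no_pattern maxM overO maxm dominant no_Kpattern.
split; first by move=> p pp pM x; exact: sub_Rp.
split; first by move=> p pp pM; exact: prime_image.
move=> q qprime qM _; apply: prime_ideal_of_contract overO qprime _ => x /qM [r [_ ->]].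
by exists r.
Qed.
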